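(* (Soundness of $\mathsf{GT}$.) For all finite multisets of formulas $\Gamma,\Delta$ of $\mathbf{PL}(\mathbin{\backslash\!\!/})$: if $\vdash_{\mathsf{GT}}\Gamma\Rightarrow\Delta$, then $\Gamma\models\bigvee\Delta$.
   Context: Fix a countably infinite set $\mathsf{Prop}$ of propositional variables. Classical formulas are generated by $\alpha ::= p \mid \bot \mid \neg\alpha \mid \alpha\wedge\alpha \mid \alpha\vee\alpha$ with $p\in\mathsf{Prop}$. Formulas of basic propositional team logic $\mathbf{PL}(\mathbin{\backslash\!\!/})$ are generated by $\phi ::= \alpha \mid \phi\wedge\phi \mid \phi\vee\phi \mid \phi\mathbin{\backslash\!\!/}\phi$ where $\alpha$ is classical (so negation is applied only to classical formulas); $\vee$ is the split disjunction and $\mathbin{\backslash\!\!/}$ the inquisitive disjunction. A team with domain $X\subseteq\mathsf{Prop}$ is a set $t\subseteq 2^X$ of valuations. For a team $t$ whose domain contains the variables of the formula: $t\models p$ iff $v(p)=1$ for all $v\in t$; $t\models\bot$ iff $t=\emptyset$; $t\models\neg\alpha$ iff $\{v\}\not\models\alpha$ for all $v\in t$; $t\models\phi\wedge\psi$ iff $t\models\phi$ and $t\models\psi$; $t\models\phi\vee\psi$ iff there are $s,u\subseteq t$ with $t=s\cup u$, $s\models\phi$, $u\models\psi$; $t\models\phi\mathbin{\backslash\!\!/}\psi$ iff $t\models\phi$ or $t\models\psi$. For a multiset $\Gamma$, $\Gamma\models\phi$ means every team satisfying all members of $\Gamma$ satisfies $\phi$. Conventions: $\bigvee\emptyset:=\bot$,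 $\bigwedge\emptyset:=\neg\bot$. A sequent is $\Gamma\Rightarrow\Delta$ with $\Gamma,\Delta$ finite multisets of formulas; ''$\Gamma,\Delta$'' denotes multiset union. Deep-inference notation: for a formula $\chi$ with a designated occurrence of a subformula that does not lie in the scope of any negation, $\chi\{\eta\}$ denotes the result of replacing that occurrence by $\eta$. The calculus $\mathsf{GT}$ (below $\alpha$ ranges over classical formulas, $\Lambda$ over multisets of classical formulas, everything else arbitrary): axioms $\Gamma,p\Rightarrow p,\Delta$ and $\Gamma,\bot\Rightarrow\Delta$; rules: (L$\neg$) from $\Gamma\Rightarrow\alpha,\Delta$ infer $\Gamma,\neg\alpha\Rightarrow\Delta$; (R$\neg$) from $\Gamma,\alpha\Rightarrow\Delta$ infer $\Gamma\Rightarrow\neg\alpha,\Delta$; (L$\wedge$) from $\Gamma,\phi,\psi\Rightarrow\Delta$ infer $\Gamma,\phi\wedge\psi\Rightarrow\Delta$; (R$\wedge$) from $\Gamma\Rightarrow\phi,\Lambda$ and $\Gamma\Rightarrow\psi,\Lambda$ infer $\Gamma\Rightarrow\phi\wedge\psi,\Lambda,\Delta$; (L$\vee$) from $\Gamma,\phi\Rightarrow\Lambda$ and $\Gamma,\psi\Rightarrow\Lambda$ infer $\Gamma,\phi\vee\psi\Rightarrow\Lambda,\Delta$; (R$\vee$) from $\Gamma\Rightarrow\phi,\psi,\Delta$ infer $\Gamma\Rightarrow\phi\vee\psi,\Delta$; (L$\mathbin{\backslash\!\!/}$) from $\Gamma,\chi\{\phi_L\}\Rightarrow\Delta$ and $\Gamma,\chi\{\phi_R\}\Rightarrow\Delta$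 infer $\Gamma,\chi\{\phi_L\mathbin{\backslash\!\!/}\phi_R\}\Rightarrow\Delta$; (R$\mathbin{\backslash\!\!/}$) from $\Gamma\Rightarrow\chi\{\phi_i\},\Delta$ ($i\in\{L,R\}$) infer $\Gamma\Rightarrow\chi\{\phi_L\mathbin{\backslash\!\!/}\phi_R\},\Delta$; (Cut) from $\Gamma\Rightarrow\phi,\Delta$ and $\Pi,\phi\Rightarrow\Sigma$ infer $\Pi,\Gamma\Rightarrow\Delta,\Sigma$. $\vdash_{\mathsf{GT}}$ denotes derivability in $\mathsf{GT}$. *)

From Stdlib Require Import List Permutation.
Import ListNotations.

Definition var := nat.

Inductive cform : Type :=
| CVar : var -> cform
| CBot : cform
| CNeg : cform -> cform
| CAnd : cform -> cform -> cform
| COr  : cform -> cform -> cform.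

Inductive form : Type :=
| Var : var -> form
| Bot : form
| Neg : cform -> form
| And : form -> form -> form
| Or  : form -> form -> form
| Ior : form -> form -> form.

Fixpoint emb (a : cform) : form :=
  match a with
  | CVar p => Var p
  | CBot => Bot
  | CNeg b => Neg b
  | CAnd b c => And (emb b) (emb c)
  | COr b c => Or (emb b) (emb c)
  end.

(* Valuations on the full variable set; a valuation of domain X is encoded
   as a v : var -> bool with v p = false for p outside X. *)
Definition valuation := var -> bool.
Definition team := valuation -> Prop.

Definition singleton (v : valuation) : team := fun w => w = v.

Fixpoint csat (a : cform) (t : team) : Prop :=
  match a with
  | CVar p => forall v, t v -> v p = true
  | CBot => forall v, ~ t v
  | CNeg b => forall v, t v -> ~ csat b (singleton v)
  | CAnd b c => csat b t /\ csat c t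
  | COr b c => exists s u : team,
      (forall v, t v <-> (s v \/ u v)) /\ csat b s /\ csat c u
  end.

Fixpoint sat (f : form) (t : team) : Prop :=
  match f with
  | Var p => forall v, t v -> v p = true
  | Bot => forall v, ~ t v
  | Neg b => forall v, t v -> ~ csat b (singleton v)
  | And f g => sat f t /\ sat g t
  | Or f g => exists s u : team,
      (forall v, t v <-> (s v \/ u v)) /\ sat f s /\ sat g u
  | Ior f g => sat f t \/ sat g t
  end.

Fixpoint coccurs (p : var) (a : cform) : Prop :=
  match a with
  | CVar q => p = q
  | CBot => False
  | CNeg b => coccurs p b
  | CAnd b c | COr b c => coccurs p b \/ coccurs p c
  end.

Fixpoint occurs (p : var) (f : form) : Prop :=
  match f with
  | Var q => p = q
  | Bot => False
  | Neg b => coccurs p b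
  | And f g | Or f g | Ior f g => occurs p f \/ occurs p g
  end.

Definition team_on (X : var -> Prop) (t : team) : Prop :=
  forall v, t v -> forall p, ~ X p -> v p = false.

Definition entails (G : list form) (f : form) : Prop :=
  forall (X : var -> Prop) (t : team),
    team_on X t ->
    (forall g, In g G -> forall p, occurs p g -> X p) ->
    (forall p, occurs p f -> X p) ->
    (forall g, In g G -> sat g t) ->
    sat f t.

Fixpoint bigvee (D : list form) : form :=
  match D with
  | [] => Bot
  | [f] => f
  | f :: r => Or f (bigvee r)
  end.

(* Deep-inference contexts: a designated occurrence of a subformula.
   Since Neg only takes classical formulas (cform), a hole in a form
   context is never in the scope of a negation. *)
Inductive ctx : Type :=
| Hole : ctx
| CtxAndL : ctx -> form -> ctx
| CtxAndR : form -> ctx -> ctx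
| CtxOrL : ctx -> form -> ctx
| CtxOrR : form -> ctx -> ctx
| CtxIorL : ctx -> form -> ctx
| CtxIorR : form -> ctx -> ctx.

Fixpoint plug (c : ctx) (e : form) : form :=
  match c with
  | Hole => e
  | CtxAndL c g => And (plug c e) g
  | CtxAndR f c => And f (plug c e)
  | CtxOrL c g => Or (plug c e) g
  | CtxOrR f c => Or f (plug c e)
  | CtxIorL c g => Ior (plug c e) g
  | CtxIorR f c => Ior f (plug c e)
  end.

(* The calculus GT. Multisets are lists taken up to permutation (rule GT_perm). *)
Inductive GT : list form -> list form -> Prop :=
| GT_perm : forall G G' D D', Permutation G G' -> Permutation D D' ->
    GT G D -> GT G' D'
| GT_ax : forall G D p, GT (Var p :: G) (Var p :: D)
| GT_bot : forall G D, GT (Bot :: G) D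
| GT_Lneg : forall G D a, GT G (emb a :: D) -> GT (Neg a :: G) D
| GT_Rneg : forall G D a, GT (emb a :: G) D -> GT G (Neg a :: D)
| GT_Land : forall G D f g, GT (f :: g :: G) D -> GT (And f g :: G) D
| GT_Rand : forall G (L : list cform) D f g,
    GT G (f :: map emb L) -> GT G (g :: map emb L) ->
    GT G (And f g :: map emb L ++ D)
| GT_Lor : forall G (L : list cform) D f g,
    GT (f :: G) (map emb L) -> GT (g :: G) (map emb L) ->
    GT (Or f g :: G) (map emb L ++ D)
| GT_Ror : forall G D f g, GT G (f :: g :: D) -> GT G (Or f g :: D)
| GT_Lior : forall G D c f g,
    GT (plug c f :: G) D -> GT (plug c g :: G) D ->
    GT (plug c (Ior f g) :: G) D
| GT_RiorL : forall G D c f g,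
    GT G (plug c f :: D) -> GT G (plug c (Ior f g) :: D)
| GT_RiorR : forall G D c f g,
    GT G (plug c g :: D) -> GT G (plug c (Ior f g) :: D)
| GT_cut : forall G D P S f,
    GT G (f :: D) -> GT (f :: P) S -> GT (P ++ G) (D ++ S).

(* Each rule of GT preserves the semantic validity of a sequent, read as
   "every team satisfying all of Γ satisfies the split disjunction of Δ".
   The semantic facts behind this are downward closure and the empty team
   property of all formulas, and flatness of classical formulas: a classical
   formula holds on a team as soon as it holds on each of its singletons, so
   it is closed under unions.  This flatness is what justifies the classical
   side context Λ in (R∧) and (L∨), and excluded middle on singletons gives
   the splitting needed for (R¬). *)

From Stdlib Require Import List Permutation Classical.
Import ListNotations.

Lemma sat_ext f : forall t t', sat f t -> (forall v, t v <-> t' v) -> sat f t'.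
Proof.
  induction f as [p| |a|f IHf g IHg|f IHf g IHg|f IHf g IHg];
    intros t t' H E; simpl in *.
  - intros v Hv; apply H, E, Hv.
  - intros v Hv; apply (H v), E, Hv.
  - intros v Hv; apply H, E, Hv.
  - destruct H; split; eauto.
  - destruct H as (s & u & Hsplit & Hs & Hu).
    exists s, u; split; [intro v; rewrite <- (E v); apply Hsplit | auto].
  - destruct H; [left | right]; eauto.
Qed.

Lemma sat_empty_team f : forall t, (forall v, ~ t v) -> sat f t.
Proof.
  induction f as [p| |a|f IHf g IHg|f IHf g IHg|f IHf g IHg]; intros t H; simpl.
  - intros v Hv; contradiction (H v).
  - exact H.
  - intros v Hv; contradiction (H v).
  - split; auto.
  - exists t, t; split; [intro v; tauto | auto].
  - left; auto.
Qed.

Lemma sat_subteam f : forall t t', sat f t -> (forall v, t' v -> t v) -> sat f t'.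
Proof.
  induction f as [p| |a|f IHf g IHg|f IHf g IHg|f IHf g IHg];
    intros t t' H Sub; simpl in *.
  - intros v Hv; apply H, Sub, Hv.
  - intros v Hv; apply (H v), Sub, Hv.
  - intros v Hv; apply H, Sub, Hv.
  - destruct H; split; eauto.
  - destruct H as (s & u & Hsplit & Hs & Hu).
    exists (fun v => t' v /\ s v), (fun v => t' v /\ u v); split.
    + intro v; specialize (Hsplit v); specialize (Sub v); tauto.
    + split; [apply (IHf s) | apply (IHg u)]; tauto.
  - destruct H; [left | right]; eauto.
Qed.

Lemma sat_singleton f t v : sat f t -> t v -> sat f (singleton v).
Proof.
  intros H Hv; apply (sat_subteam f t); [exact H | intros w ->; exact Hv].
Qed.

Lemma csat_emb a : forall t, csat a t <-> sat (emb a) t.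
Proof.
  induction a as [p| |b|b IHb c IHc|b IHb c IHc]; intro t; simpl; try tauto.
  - rewrite IHb, IHc; tauto.
  - split; intros (s & u & Hsplit & Hs & Hu); exists s, u;
      (split; [exact Hsplit | split; [apply IHb | apply IHc]; assumption]).
Qed.

Lemma sat_emb_flat a : forall t,
  (forall v, t v -> sat (emb a) (singleton v)) -> sat (emb a) t.
Proof.
  induction a as [p| |b|b IHb c IHc|b IHb c IHc]; intros t H; simpl in *;
    try (intros v Hv; exact (H v Hv v eq_refl)).
  - split; [apply IHb | apply IHc]; intros v Hv; apply (H v Hv).
  - exists (fun v => t v /\ sat (emb b) (singleton v)),
           (fun v => t v /\ sat (emb c) (singleton v)); split.
    + intro v; split; [intro Hv | tauto].
      destruct (H v Hv) as (s & u & Hsplit & Hs & Hu).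
      destruct (proj1 (Hsplit v) eq_refl) as [Hsv | Huv].
      * left; split; [exact Hv | exact (sat_singleton _ _ _ Hs Hsv)].
      * right; split; [exact Hv | exact (sat_singleton _ _ _ Hu Huv)].
    + split; [apply IHb | apply IHc]; intros v [_ Hv]; exact Hv.
Qed.

Lemma sat_emb_union a s u t :
  sat (emb a) s -> sat (emb a) u -> (forall v, t v -> s v \/ u v) -> sat (emb a) t.
Proof.
  intros Hs Hu Ht; apply sat_emb_flat; intros v Hv.
  destruct (Ht v Hv); [exact (sat_singleton _ _ _ Hs H) | exact (sat_singleton _ _ _ Hu H)].
Qed.

Lemma sat_bigvee_cons f D t : sat (bigvee (f :: D)) t <->
  exists s u, (forall v, t v <-> s v \/ u v) /\ sat f s /\ sat (bigvee D) u.
Proof.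
  destruct D as [|g D]; [|reflexivity].
  simpl; split.
  - intro H; exists t, (fun _ => False); split; [intro v; tauto | auto].
  - intros (s & u & Hsplit & Hs & Hu); apply (sat_ext f s); [exact Hs |].
    intro v; rewrite Hsplit; specialize (Hu v); tauto.
Qed.

Lemma sat_bigvee_app D1 : forall D2 t s u, (forall v, t v <-> s v \/ u v) ->
  sat (bigvee D1) s -> sat (bigvee D2) u -> sat (bigvee (D1 ++ D2)) t.
Proof.
  induction D1 as [|f D1 IH]; intros D2 t s u Hsplit Hs Hu.
  - simpl in Hs; apply (sat_ext _ u); [exact Hu |].
    intro v; rewrite Hsplit; specialize (Hs v); tauto.
  - apply sat_bigvee_cons in Hs as (s1 & s2 & Hsplit' & H1 & H2).
    apply sat_bigvee_cons; exists s1, (fun v => s2 v \/ u v); split.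
    + intro v; rewrite Hsplit, Hsplit'; tauto.
    + split; [exact H1 | apply (IH D2 _ s2 u); [intro v; tauto | exact H2 | exact Hu]].
Qed.

Lemma sat_bigvee_app_l D1 D2 t : sat (bigvee D1) t -> sat (bigvee (D1 ++ D2)) t.
Proof.
  intro H; apply (sat_bigvee_app D1 D2 t t (fun _ => False)); [intro v; tauto | exact H |].
  apply sat_empty_team; auto.
Qed.

Lemma sat_bigvee_perm D D' :
  Permutation D D' -> forall t, sat (bigvee D) t -> sat (bigvee D') t.
Proof.
  induction 1 as [|f D D' _ IH|f g D|D D' D'' _ IH1 _ IH2]; intros t H; auto.
  - apply sat_bigvee_cons in H as (s & u & Hsplit & Hs & Hu).
    apply sat_bigvee_cons; exists s, u; auto.
  - apply sat_bigvee_cons in H as (s & u & Hsplit & Hs & Hu).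
    apply sat_bigvee_cons in Hu as (s' & u' & Hsplit' & Hs' & Hu').
    apply sat_bigvee_cons; exists s', (fun v => s v \/ u' v); split.
    + intro v; rewrite Hsplit, Hsplit'; tauto.
    + split; [exact Hs' |].
      apply sat_bigvee_cons; exists s, u'; split; [intro v; tauto | auto].
Qed.

Fixpoint cbigvee (L : list cform) : cform :=
  match L with [] => CBot | [a] => a | a :: r => COr a (cbigvee r) end.

Lemma bigvee_map_emb L : bigvee (map emb L) = emb (cbigvee L).
Proof.
  induction L as [|a [|b L] IH]; [reflexivity | reflexivity |].
  change (Or (emb a) (bigvee (map emb (b :: L))) = Or (emb a) (emb (cbigvee (b :: L)))).
  rewrite IH; reflexivity.
Qed.

Lemma sat_plug_mono c f f' : (forall t, sat f t -> sat f' t) ->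
  forall t, sat (plug c f) t -> sat (plug c f') t.
Proof.
  intro Hf; induction c; simpl; intros t H; auto.
  all: try (destruct H; split; eauto; fail).
  all: try (destruct H as (s & u & Hsplit & Hs & Hu); exists s, u; eauto; fail).
  all: destruct H; [left | right]; eauto.
Qed.

Lemma sat_plug_ior c f g : forall t,
  sat (plug c (Ior f g)) t -> sat (plug c f) t \/ sat (plug c g) t.
Proof.
  induction c; simpl; intros t H.
  - exact H.
  - destruct H as [H1 H2]; destruct (IHc _ H1); [left | right]; auto.
  - destruct H as [H1 H2]; destruct (IHc _ H2); [left | right]; auto.
  - destruct H as (s & u & Hsplit & Hs & Hu); destruct (IHc _ Hs);
      [left | right]; exists s, u; auto.
  - destruct H as (s & u & Hsplit & Hs & Hu); destruct (IHc _ Hu);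
      [left | right]; exists s, u; auto.
  - destruct H as [H | H]; [destruct (IHc _ H) | ]; tauto.
  - destruct H as [H | H]; [| destruct (IHc _ H)]; tauto.
Qed.

Definition sat_all (G : list form) (t : team) : Prop := forall g, In g G -> sat g t.

Lemma sat_all_cons f G t : sat_all (f :: G) t <-> sat f t /\ sat_all G t.
Proof.
  unfold sat_all; simpl; split.
  - intro H; split; auto.
  - intros [Hf HG] g [<- | Hg]; auto.
Qed.

Lemma sat_all_app G1 G2 t : sat_all (G1 ++ G2) t <-> sat_all G1 t /\ sat_all G2 t.
Proof.
  unfold sat_all; split.
  - intro H; split; intros g Hg; apply H, in_or_app; auto.
  - intros [H1 H2] g Hg; apply in_app_or in Hg as [Hg | Hg]; auto.
Qed.

Lemma sat_all_subteam G t t' : sat_all G t -> (forall v, t' v -> t v) -> sat_all G t'.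
Proof. intros H Sub g Hg; exact (sat_subteam g t t' (H g Hg) Sub). Qed.

Definition valid (G D : list form) : Prop :=
  forall t, sat_all G t -> sat (bigvee D) t.

Lemma valid_perm G G' D D' :
  Permutation G G' -> Permutation D D' -> valid G D -> valid G' D'.
Proof.
  intros PG PD H t Ht; apply (sat_bigvee_perm D D' PD), H.
  intros g Hg; apply Ht; exact (Permutation_in g PG Hg).
Qed.

Lemma valid_ax G D p : valid (Var p :: G) (Var p :: D).
Proof.
  intros t Ht; apply sat_all_cons in Ht as [Hp _].
  exact (sat_bigvee_app_l [Var p] D t Hp).
Qed.

Lemma valid_bot G D : valid (Bot :: G) D.
Proof.
  intros t Ht; apply sat_all_cons in Ht as [Hbot _]; exact (sat_empty_team _ t Hbot).
Qed.

Lemma valid_Lneg G D a : valid G (emb a :: D) -> valid (Neg a :: G) D.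
Proof.
  intros H t Ht; apply sat_all_cons in Ht as [Hneg HG].
  destruct (proj1 (sat_bigvee_cons _ _ _) (H t HG)) as (s & u & Hsplit & Hs & Hu).
  apply (sat_ext _ u); [exact Hu |]; intro v; rewrite Hsplit; split; [tauto |].
  intros [Hsv | Huv]; [| exact Huv].
  exfalso; apply (Hneg v); [apply Hsplit; auto |].
  apply csat_emb; exact (sat_singleton _ _ _ Hs Hsv).
Qed.

Lemma valid_Rneg G D a : valid (emb a :: G) D -> valid G (Neg a :: D).
Proof.
  intros H t HG; apply sat_bigvee_cons.
  exists (fun v => t v /\ ~ csat a (singleton v)),
         (fun v => t v /\ csat a (singleton v)); split.
  - intro v; destruct (classic (csat a (singleton v))); tauto.
  - split; [simpl; tauto |].
    apply H, sat_all_cons; split.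
    + apply sat_emb_flat; intros v [_ Hv]; apply csat_emb, Hv.
    + apply (sat_all_subteam G t); tauto.
Qed.

Lemma valid_Land G D f g : valid (f :: g :: G) D -> valid (And f g :: G) D.
Proof.
  intros H t Ht; apply sat_all_cons in Ht as [[Hf Hg] HG].
  apply H, sat_all_cons; split; [| apply sat_all_cons]; auto.
Qed.

Lemma valid_Rand G L D f g : valid G (f :: map emb L) -> valid G (g :: map emb L) ->
  valid G (And f g :: map emb L ++ D).
Proof.
  intros Hf Hg t HG.
  destruct (proj1 (sat_bigvee_cons _ _ _) (Hf t HG)) as (s & u & Hsplit & Hs & Hu).
  destruct (proj1 (sat_bigvee_cons _ _ _) (Hg t HG)) as (s' & u' & Hsplit' & Hs' & Hu').
  apply (sat_bigvee_app_l (And f g :: map emb L)), sat_bigvee_cons.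
  exists (fun v => s v /\ s' v), (fun v => u v \/ u' v); split.
  - intro v; specialize (Hsplit v); specialize (Hsplit' v); tauto.
  - split; [split; [apply (sat_subteam f s) | apply (sat_subteam g s')]; tauto |].
    rewrite bigvee_map_emb in *; exact (sat_emb_union _ u u' _ Hu Hu' (fun v H => H)).
Qed.

Lemma valid_Lor G L D f g : valid (f :: G) (map emb L) -> valid (g :: G) (map emb L) ->
  valid (Or f g :: G) (map emb L ++ D).
Proof.
  intros Hf Hg t Ht; apply sat_all_cons in Ht as [(s & u & Hsplit & Hs & Hu) HG].
  apply sat_bigvee_app_l.
  assert (HLs : sat (bigvee (map emb L)) s).
  { apply Hf, sat_all_cons; split; [exact Hs |].
    apply (sat_all_subteam G t); [exact HG | intro v; rewrite Hsplit; tauto]. }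
  assert (HLu : sat (bigvee (map emb L)) u).
  { apply Hg, sat_all_cons; split; [exact Hu |].
    apply (sat_all_subteam G t); [exact HG | intro v; rewrite Hsplit; tauto]. }
  rewrite bigvee_map_emb in *.
  exact (sat_emb_union _ s u t HLs HLu (fun v => proj1 (Hsplit v))).
Qed.

Lemma valid_Ror G D f g : valid G (f :: g :: D) -> valid G (Or f g :: D).
Proof.
  intros H t HG.
  destruct (proj1 (sat_bigvee_cons _ _ _) (H t HG)) as (s & u & Hsplit & Hs & Hu).
  apply sat_bigvee_cons in Hu as (s' & u' & Hsplit' & Hs' & Hu').
  apply sat_bigvee_cons; exists (fun v => s v \/ s' v), u'; split.
  - intro v; rewrite Hsplit, Hsplit'; tauto.
  - split; [exists s, s'; split; [intro v; tauto | auto] | exact Hu'].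
Qed.

Lemma valid_Lior G D c f g : valid (plug c f :: G) D -> valid (plug c g :: G) D ->
  valid (plug c (Ior f g) :: G) D.
Proof.
  intros Hf Hg t Ht; apply sat_all_cons in Ht as [Hior HG].
  destruct (sat_plug_ior c f g t Hior); [apply Hf | apply Hg]; apply sat_all_cons; auto.
Qed.

Lemma valid_plug_mono G D c f f' : (forall t, sat f t -> sat f' t) ->
  valid G (plug c f :: D) -> valid G (plug c f' :: D).
Proof.
  intros Hff' H t HG.
  destruct (proj1 (sat_bigvee_cons _ _ _) (H t HG)) as (s & u & Hsplit & Hs & Hu).
  apply sat_bigvee_cons; exists s, u; split; [exact Hsplit |].
  split; [exact (sat_plug_mono c f f' Hff' s Hs) | exact Hu].
Qed.

Lemma valid_cut G D P S f : valid G (f :: D) -> valid (f :: P) S -> valid (P ++ G) (D ++ S).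
Proof.
  intros Hf HS t Ht; apply sat_all_app in Ht as [HP HG].
  destruct (proj1 (sat_bigvee_cons _ _ _) (Hf t HG)) as (s & u & Hsplit & Hs & Hu).
  apply (sat_bigvee_app D S t u s); [intro v; rewrite Hsplit; tauto | exact Hu |].
  apply HS, sat_all_cons; split; [exact Hs |].
  apply (sat_all_subteam P t); [exact HP | intro v; rewrite Hsplit; tauto].
Qed.

Lemma GT_valid G D : GT G D -> valid G D.
Proof.
  induction 1.
  - eapply valid_perm; eauto.
  - apply valid_ax.
  - apply valid_bot.
  - apply valid_Lneg; assumption.
  - apply valid_Rneg; assumption.
  - apply valid_Land; assumption.
  - apply valid_Rand; assumption.
  - apply valid_Lor; assumption.
  - apply valid_Ror; assumption.
  - apply valid_Lior; assumption.
  - apply (valid_plug_mono _ _ c f); [intros t H'; left |]; assumption.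
  - apply (valid_plug_mono _ _ c g); [intros t H'; right |]; assumption.
  - eapply valid_cut; eauto.
Qed.

Theorem theorem3p2 : forall (G D : list form), GT G D -> entails G (bigvee D).
Proof.
  intros G D H X t _ _ _ HG; exact (GT_valid G D H t HG).
Qed.
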